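(* Assume that $N\le p$. Then $(k[U_N])_{[e-1]}\subset k[U_N]_{<d}\subset(k[U_N])_{[(p-1)(d-1)]}$ provided that $e(N-1)<d$.
   Context: $k$ is an algebraically closed field of characteristic $p>0$; $k[\mathbb G_a]=k[T]$. $U_N\subset GL_N$ is the group of upper triangular unipotent $N\times N$ matrices, $k[U_N]=k[x_{i,j}:1\le i<j\le N]$, and $k[U_N]_{<d}$ is the subspace of polynomials of total degree $<d$ in the $x_{i,j}$. $U_N$ carries the structure of exponential type $\mathcal E_B(t)=\exp_B(t)=\sum_{n=0}^{p-1}(tB)^n/n!$ for strictly upper triangular $B$ with $B^p=0$. $(k[U_N])_{[d]}$ is the set of $f\in k[U_N]$ such that $\exp_B^*(f)\in k[T]$ has degree $\le d$ for all such $B$. *)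

From HB Require Import structures.
From mathcomp Require Import all_boot all_order all_algebra.
From mathcomp Require Export mpoly.
Set Implicit Arguments. Unset Strict Implicit. Unset Printing Implicit Defensive.
Import Order.TTheory GRing.Theory Num.Theory.
Local Open Scope ring_scope.

(* k[U_N] is realised as the subring of {mpoly k[N*N]} (variables = the
   matrix entries x_{i,j}, indexed by mxvec_index i j) consisting of the
   polynomials that only involve the variables x_{i,j} with i < j. *)
Definition upper_var (N : nat) (v : 'I_(N * N)) : bool :=
  [exists i : 'I_N, exists j : 'I_N, (i < j)%N && (v == mxvec_index i j)].

Definition in_kUN (k : fieldType) (N : nat) (f : {mpoly k[N * N]}) : Prop :=
  forall (m : 'X_{1..N * N}) (v : 'I_(N * N)),
    m \in msupp f -> (0 < m v)%N -> upper_var v.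

Definition strictly_upper (k : fieldType) (N : nat) (B : 'M[k]_N) : Prop :=
  forall i j : 'I_N, (j <= i)%N -> B i j = 0.

Definition expB (k : fieldType) (p N : nat) (B : 'M[k]_N) : 'M[{poly k}]_N :=
  \sum_(n < p) (('X ^+ n) * ((n`!)%:R^-1)%:P) *: map_mx polyC (B ^+ n).

(* exp_B^*(f) in k[T]: substitute x_{i,j} := (exp_B(t))_{i,j} *)
Definition pullback (k : fieldType) (p N : nat) (B : 'M[k]_N)
  (f : {mpoly k[N * N]}) : {poly k} :=
  mmap (@polyC k) (fun v : 'I_(N * N) => (mxvec (expB p B)) 0 v) f.

(* (k[U_N])_{[d]} for an integer d : f in k[U_N] with deg exp_B^*(f) <= d
   for all strictly upper triangular B with B^p = 0 (deg 0 = -oo, i.e.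
   the zero polynomial satisfies every bound). *)
Definition in_Udeg (k : fieldType) (p N : nat) (d : int)
  (f : {mpoly k[N * N]}) : Prop :=
  in_kUN f /\
  forall B : 'M[k]_N, strictly_upper B -> B ^+ p = 0 ->
    ((size (pullback p B f))%:Z - 1 <= d)%R.

(* Let X be the generic strictly upper triangular N x N matrix. As N <= p,
   the truncated series exp and log are mutually inverse on strictly upper
   triangular matrices, since exp (log (1 + x)) = 1 + x modulo x^N follows
   from the differential equation (1 + x) F' = F, whose recursion only divides
   by integers smaller than p. Hence f in k[U_N] equals g o log with
   g := f o exp, where the entries of exp X and log X have degree at most
   p - 1 and N - 1. Restricting g to the line t |-> t B gives exp_B^*(f), and
   over an infinite field the degree of g is the maximal degree of these
   restrictions. So deg exp_B^*(f) <= e - 1 for all B bounds deg g by e - 1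
   and deg f by (e - 1)(N - 1) < d, while deg f < d bounds every exp_B^*(f)
   by (d - 1)(p - 1). *)

From HB Require Import structures.
From mathcomp Require Import all_boot all_order all_algebra.
From mathcomp Require Import mpoly.
Import Order.TTheory GRing.Theory Num.Theory.
Set Implicit Arguments. Unset Strict Implicit. Unset Printing Implicit Defensive.
Local Open Scope ring_scope.

Section TruncatedExpLog.
Variables (k : fieldType) (p : nat).
Hypothesis hp : p \in [pchar k].

Lemma natf_neq0_lt_pchar i : (0 < i < p)%N -> i%:R != 0 :> k.
Proof.
move=> /andP[i_gt0 i_lt_p]; rewrite -(dvdn_pcharf hp).
by apply/negP => /(dvdn_leq i_gt0); rewrite leqNgt i_lt_p.
Qed.

Definition exp_coef j : k := (j`!%:R)^-1.

Definition log_coef i : k := if i == 0%N then 0 else (-1) ^+ i.+1 / i%:R.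

Definition trunc_exp m (q : {poly k}) : {poly k} :=
  \sum_(j < m) exp_coef j *: q ^+ j.

Definition trunc_log n : {poly k} := \poly_(i < n) log_coef i.

Lemma trunc_expS m q :
  trunc_exp m.+1 q = trunc_exp m q + exp_coef m *: q ^+ m.
Proof. by rewrite /trunc_exp big_ord_recr. Qed.

Lemma deriv_trunc_exp m q : (m < p)%N ->
  (trunc_exp m.+1 q)^`() = q^`() * trunc_exp m q.
Proof.
move=> m_lt_p; rewrite /trunc_exp raddf_sum big_ord_recl /= derivZ deriv_exp.
rewrite mulr0n scaler0 add0r mulr_sumr; apply: eq_bigr => j _.
rewrite derivZ deriv_exp /= -scaler_nat scalerA -scalerAr; congr (_ *: _).
have j1_lt_p : (0 < j.+1 < p)%N by rewrite /= (leq_ltn_trans _ m_lt_p).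
rewrite /exp_coef factS natrM invfM mulrAC mulVf ?mul1r //.
exact: natf_neq0_lt_pchar.
Qed.

Lemma trunc_logE n : trunc_log n = 'X * \poly_(i < n.-1) log_coef i.+1.
Proof.
apply/polyP => i; rewrite coefXM !coef_poly.
by case: i => [|i] /=; [case: ifP | case: n].
Qed.

Lemma coef_trunc_log_expr n m i : (i < m)%N -> (trunc_log n ^+ m)`_i = 0.
Proof. by move=> i_lt_m; rewrite trunc_logE exprMn coefXnM i_lt_m. Qed.

Lemma coef_1pX_deriv_trunc_log n i : (n <= p)%N -> (i.+1 < n)%N ->
  ((1 + 'X) * (trunc_log n)^`())`_i = (i == 0%N)%:R.
Proof.
move=> n_le_p i1_lt_n.
have coef_deriv_log j : (j.+1 < n)%N -> (trunc_log n)^`()`_j = (-1) ^+ j.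
  have log_coefS : log_coef j.+1 = (-1) ^+ j.+2 / j.+1%:R by [].
  move=> j1_lt_n; rewrite coef_deriv coef_poly j1_lt_n log_coefS.
  rewrite -[_ *+ j.+1]mulr_natr divfK ?exprSr ?mulrN1 ?opprK //.
  by rewrite natf_neq0_lt_pchar //= (leq_trans j1_lt_n).
rewrite mulrDl mul1r coefD coefXM coef_deriv_log //.
case: i i1_lt_n => [|i] i1_lt_n /=; first by rewrite addr0.
by rewrite coef_deriv_log ?(ltn_trans _ i1_lt_n) // exprS mulN1r addNr.
Qed.

Lemma ode_coef_eq0 (F : {poly k}) n : (n <= p)%N -> F`_0 = 0 ->
  (forall i, (i.+1 < n)%N -> ((1 + 'X) * F^`())`_i = F`_i) ->
  forall i, (i < n)%N -> F`_i = 0.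
Proof.
move=> n_le_p F0 odeF; elim=> [|i IHi] i1_lt_n //.
have Fi0 : F`_i = 0 by apply/IHi/ltnW.
have := odeF i i1_lt_n; rewrite mulrDl mul1r coefD coefXM !coef_deriv Fi0.
have -> : (if i == 0%N then 0 else F`_i.-1.+1 *+ i.-1.+1) = 0.
  by case: i {IHi i1_lt_n} Fi0 => [|i] //= ->; rewrite mul0rn.
rewrite addr0 -mulr_natr => /eqP; rewrite mulf_eq0 => /orP[/eqP //|].
by rewrite (negbTE (natf_neq0_lt_pchar _)) //= (leq_trans i1_lt_n).
Qed.

(* Both sides solve (1 + X) F' = F modulo X^(n - 1) with F(0) = 1. *)
Lemma coef_trunc_exp_log n i : (n <= p)%N -> (i < n)%N ->
  (trunc_exp p (trunc_log n))`_i = (1 + 'X)`_i.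
Proof.
move=> n_le_p i_lt_n; apply/eqP; rewrite -subr_eq0 -coefB; apply/eqP.
have [m Dp] : exists m, p = m.+1.
  by exists p.-1; rewrite prednK // prime_gt0 ?(pcharf_prime hp).
set l := trunc_log n; set H := trunc_exp m l.
move: i i_lt_n; apply: ode_coef_eq0 => // [|i i1_lt_n].
  rewrite coefB coefD coef1 coefX addr0 Dp coef_sum big_ord_recl big1.
    by rewrite expr0 coefZ coef1 mulr1 /exp_coef fact0 invr1 addr0 subrr.
  by move=> j _; rewrite coefZ coef_trunc_log_expr ?mulr0.
have i_lt_m : (i < m)%N by rewrite -ltnS -Dp (leq_trans i1_lt_n).
have GH : (trunc_exp p l)`_i = H`_i.
  by rewrite Dp trunc_expS coefD coefZ coef_trunc_log_expr // mulr0 addr0.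
rewrite derivB derivD derivX -polyC1 derivC add0r mulrBr mulr1 !coefB GH.
congr (_ - _).
rewrite Dp deriv_trunc_exp -?Dp // mulrA coefM big_ord_recl subn0.
rewrite coef_1pX_deriv_trunc_log ?(leq_ltn_trans _ i1_lt_n) // mul1r.
rewrite big1 ?addr0 // => j _.
rewrite coef_1pX_deriv_trunc_log ?mul0r //.
by rewrite (leq_ltn_trans _ i1_lt_n) // ltnS (ltn_ord j).
Qed.

End TruncatedExpLog.

Section StrictlyUpper.
Variables (R : pzRingType) (n : nat) (A : 'M[R]_n).
Hypothesis A_upper : forall i j : 'I_n, (j <= i)%N -> A i j = 0.

Lemma strictly_upper_expr_eq0 m (i j : 'I_n) :
  (j < i + m)%N -> (A ^+ m) i j = 0.
Proof.
elim: m i j => [|m IHm] i j lt_j_im.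
  rewrite expr0 mxE addn0 in lt_j_im *.
  by rewrite eq_sym -val_eqE /= (ltn_eqF lt_j_im).
rewrite exprSr -mulmxE mxE big1 // => l _.
have [lt_l_im|le_im_l] := ltnP l (i + m); first by rewrite IHm ?mul0r.
by rewrite A_upper ?mulr0 // (leq_trans _ le_im_l) // -ltnS -addnS.
Qed.

Lemma strictly_upper_nilpotent : A ^+ n = 0.
Proof.
apply/matrixP => i j; rewrite mxE strictly_upper_expr_eq0 //.
exact: leq_trans (ltn_ord j) (leq_addl _ _).
Qed.

Lemma strictly_upper_exprS m (i j : 'I_n) : (j <= i)%N -> (A ^+ m.+1) i j = 0.
Proof.
move=> le_ji; rewrite strictly_upper_expr_eq0 //.
by rewrite addnS ltnS (leq_trans le_ji) ?leq_addr.
Qed.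

End StrictlyUpper.

Definition mx_series (k : fieldType) (R : comAlgType k) n (c : nat -> k) m
  (A : 'M[R]_n) : 'M[R]_n :=
  \sum_(j < m) (c j)%:A *: A ^+ j.

Definition mx_exp (k : fieldType) (R : comAlgType k) n p (A : 'M[R]_n) :=
  mx_series (@exp_coef k) p A.

Definition mx_log (k : fieldType) (R : comAlgType k) n (A : 'M[R]_n) :=
  mx_series (@log_coef k) n A.

Lemma map_mx_expr (R S : pzRingType) (rho : {rmorphism R -> S}) n
    (A : 'M[R]_n) m :
  map_mx rho (A ^+ m) = map_mx rho A ^+ m.
Proof.
elim: m => [|m IHm]; last by rewrite !exprS -!mulmxE map_mxM IHm.
by rewrite !expr0; apply/matrixP => i j; rewrite !mxE rmorph_nat.
Qed.

Lemma map_mx_series (k : fieldType) (R S : comAlgType k)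
    (rho : {rmorphism R -> S}) n c m (A : 'M[R]_n) :
  (forall a : k, rho a%:A = a%:A) ->
  map_mx rho (mx_series c m A) = mx_series c m (map_mx rho A).
Proof.
move=> rho_alg; rewrite /mx_series map_mx_sum; apply: eq_bigr => j _.
by rewrite map_mxZ rho_alg map_mx_expr.
Qed.

Lemma mx_series_horner (k : fieldType) (R : comAlgType k) n c m
    (A : 'M[R]_n.+1) (q : {poly k}) :
  mx_series c m (horner_mx A (map_poly (in_alg R) q)) =
  horner_mx A (map_poly (in_alg R) (\sum_(j < m) c j *: q ^+ j)).
Proof.
rewrite /mx_series 2!rmorph_sum /=; apply: eq_bigr => j _.
by rewrite map_polyZ horner_mxZ !rmorphXn.
Qed.

Lemma mx_exp_log (k : fieldType) (R : comAlgType k) n p (A : 'M[R]_n) :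
  p \in [pchar k] -> (n <= p)%N -> A ^+ n = 0 -> mx_exp p (mx_log A) = 1 + A.
Proof.
move=> hp n_le_p An0; case: n A An0 n_le_p => [|n] A An0 n_le_p.
  by apply/matrixP => -[].
set G := trunc_exp p (trunc_log k n.+1).
have GE : G = 1 + 'X + drop_poly n.+1 (G - (1 + 'X)) * 'X^(n.+1).
  rewrite -[G in LHS](subrK (1 + 'X)) addrC; congr (_ + _).
  rewrite -[LHS](poly_take_drop n.+1) -[RHS]add0r; congr (_ + _).
  apply/polyP => i; rewrite coef_take_poly coef0 coefB.
  by case: ifP => // /(coef_trunc_exp_log hp n_le_p) ->; rewrite subrr.
have -> : mx_log A = horner_mx A (map_poly (in_alg R) (trunc_log k n.+1)).
  have hAX : horner_mx A (map_poly (in_alg R) 'X) = A.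
    by rewrite map_polyX horner_mx_X.
  by rewrite /mx_log -[A in LHS]hAX mx_series_horner /trunc_log poly_def.
rewrite /mx_exp mx_series_horner -/(trunc_exp _ _) -/G GE.
rewrite !(rmorphD, rmorphM, rmorphXn, rmorph1) /= !map_polyX horner_mx_X.
by rewrite An0 mulr0 addr0.
Qed.

Lemma mx_series_strictly_upper (k : fieldType) (R : comAlgType k) n c m
    (A : 'M[R]_n) :
  c 0%N = 0 -> (forall i j : 'I_n, (j <= i)%N -> A i j = 0) ->
  forall i j : 'I_n, (j <= i)%N -> mx_series c m A i j = 0.
Proof.
move=> c0 A_upper i j le_ji; rewrite summxE big1 // => -[[|t] t_lt_m] _.
  by rewrite c0 scale0r mxE mul0r.
by rewrite mxE strictly_upper_exprS ?mulr0.
Qed.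

Lemma scalemx_expr (R : comPzRingType) n (a : R) (A : 'M[R]_n) m :
  (a *: A) ^+ m = a ^+ m *: A ^+ m.
Proof.
elim: m => [|m IHm]; first by rewrite !expr0 scale1r.
by rewrite !exprS IHm -!mulmxE -scalemxAl -scalemxAr scalerA.
Qed.

Lemma mx_exp_expB (k : fieldType) p n (B : 'M[k]_n) :
  mx_exp p ('X *: map_mx polyC B) = expB p B.
Proof.
rewrite /mx_exp /mx_series /expB; apply: eq_bigr => j _.
by rewrite scalemx_expr map_mx_expr scalerA alg_polyC mulrC.
Qed.

Section UpperCoordinates.
Variable N : nat.

Definition upper_mx (R : pzRingType) (b : 'I_(N * N) -> R) : 'M[R]_N :=
  \matrix_(i, j) if (i < j)%N then b (mxvec_index i j) else 0.

Definition mx_coords (R : pzRingType) (A : 'M[R]_N) : (N * N).-tuple R :=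
  [tuple mxvec A 0 v | v < N * N].

Lemma upper_mx_strictly_upper (R : pzRingType) (b : 'I_(N * N) -> R)
    (i j : 'I_N) :
  (j <= i)%N -> upper_mx b i j = 0.
Proof. by move=> le_ji; rewrite mxE ltnNge le_ji. Qed.

Lemma map_upper_mx (R S : pzRingType) (rho : {additive R -> S}) b :
  map_mx rho (upper_mx b) = upper_mx (rho \o b).
Proof. by apply/matrixP => i j; rewrite !mxE; case: ifP; rewrite ?raddf0. Qed.

Lemma upper_mx_coords (R : pzRingType) (A : 'M[R]_N) :
  (forall i j : 'I_N, (j <= i)%N -> A i j = 0) ->
  upper_mx (fun v => mxvec A 0 v) = A.
Proof.
move=> A_upper; apply/matrixP => i j; rewrite !mxE mxvecE.
by case: ltnP => // /A_upper ->.
Qed.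

End UpperCoordinates.

Lemma rmorph_comp_mpoly (R : comNzRingType) n m (S : comNzRingType)
    (rho : {rmorphism {mpoly R[m]} -> S}) (lq : n.-tuple {mpoly R[m]})
    (f : {mpoly R[n]}) :
  rho (f \mPo lq) = mmap (rho \o @mpolyC m R) (fun i => rho (tnth lq i)) f.
Proof.
rewrite /comp_mpoly /mmap rmorph_sum; apply: eq_bigr => mm _.
rewrite rmorphM rmorph_prod; congr (_ * _).
by apply: eq_bigr => i _; rewrite rmorphXn.
Qed.

Lemma eq_mmap (R S : nzRingType) n (f1 f2 : R -> S) (h1 h2 : 'I_n -> S)
    (g : {mpoly R[n]}) :
  f1 =1 f2 -> (forall mm i, mm \in msupp g -> (0 < mm i)%N -> h1 i = h2 i) ->
  mmap f1 h1 g = mmap f2 h2 g.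
Proof.
move=> eq_f eq_h; apply: eq_big_seq => mm mm_g; rewrite eq_f; congr (_ * _).
apply: eq_bigr => i _; have [->|mm_i] := posnP (mm i); first by rewrite !expr0.
by rewrite (eq_h mm).
Qed.

Lemma lift_ord_maxE n (j : 'I_n) : lift ord_max j = widen_ord (leqnSn n) j.
Proof. exact/val_inj/lift_max. Qed.

Definition mnm_init n (m : 'X_{1..n.+1}) : 'X_{1..n} :=
  [multinom m (widen_ord (leqnSn n) i) | i < n].

Lemma mnm_init_last_inj n (m1 m2 : 'X_{1..n.+1}) :
  mnm_init m1 = mnm_init m2 -> m1 ord_max = m2 ord_max -> m1 = m2.
Proof.
move/mnmP=> eq_init eq_last; apply/mnmP => i.
case: (unliftP ord_max i) => [j ->|->] //.
by have := eq_init j; rewrite !mnmE lift_ord_maxE.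
Qed.

Lemma mcoeff_muni (R : nzRingType) n (P : {mpoly R[n.+1]}) (m : 'X_{1..n.+1}) :
  ((muni P)`_(m ord_max))@_(mnm_init m) = P@_m.
Proof.
rewrite muniE coef_sum [in RHS](mpolyE P) !raddf_sum /=.
apply: eq_bigr => m' _.
rewrite coefZ coefXn mulr_natr mcoeffMn !mcoeffZ !mcoeffX.
have [->|ne] := eqVneq m' m; first by rewrite !eqxx.
rewrite mulr0; case: eqP => [eq_init|]; last by rewrite mulr0 mul0rn.
case: eqP => [eq_last|//]; case/eqP: ne.
exact: mnm_init_last_inj.
Qed.

Lemma mcoeff_pihomog (R : nzRingType) n D (g : {mpoly R[n]}) mm :
  mdeg mm = D -> (pihomog mdeg D g)@_mm = g@_mm.
Proof.
move=> <-; rewrite [in RHS](mpolyE g) pihomogE !raddf_sum big_mkcond /=.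
apply: eq_bigr => m' _; rewrite mcoeffZ mcoeffX.
by case: (eqVneq m' mm) => [->|_]; rewrite ?eqxx ?mulr0 //; case: ifP.
Qed.

Section LineRestriction.
Variable k : fieldType.

Definition restr_line n (b : 'I_n -> k) (g : {mpoly k[n]}) : {poly k} :=
  mmap (@polyC k) (fun i => (b i)%:P * 'X) g.

Lemma restr_lineE n (b : 'I_n -> k) (g : {mpoly k[n]}) :
  restr_line b g =
  \sum_(mm <- msupp g) (g@_mm * \prod_i b i ^+ mm i) *: 'X^(mdeg mm).
Proof.
apply: eq_bigr => mm _; rewrite /mmap1 -mul_polyC polyCM -mulrA; congr (_ * _).
rewrite mdegE; elim/big_rec3: _ => [|i s1 s2 s3 _ ->]; first by rewrite mulr1.
by rewrite exprMn exprD polyCM rmorphXn mulrACA.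
Qed.

Lemma coef_restr_line n (b : 'I_n -> k) (g : {mpoly k[n]}) D :
  (restr_line b g)`_D = (pihomog mdeg D g).@[b].
Proof.
rewrite restr_lineE coef_sum pihomogE raddf_sum [RHS]big_mkcond /=.
apply: eq_bigr => mm _; rewrite coefZ coefXn eq_sym.
by case: ifP; rewrite ?mulr1 ?mulr0 ?meval0 // mevalZ mevalX.
Qed.

Lemma size_restr_line_le n (b : 'I_n -> k) (g : {mpoly k[n]}) :
  (size (restr_line b g) <= msize g)%N.
Proof.
rewrite restr_lineE (leq_trans (size_sum _ _ _)) //.
apply/bigmax_leqP_seq => mm mm_g _.
by rewrite (leq_trans (size_scale_leq _ _)) // size_polyXn msize_mdeg_lt.
Qed.

End LineRestriction.

Section Vanishing.
Variable k : closedFieldType.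

Lemma poly_exists_nonroot (q : {poly k}) : q != 0 -> exists x, q.[x] != 0.
Proof.
move=> q0; have : size (q * 'X - 1) != 1%N.
  rewrite size_polyDl ?size_mulX // ?eqSS ?size_poly_eq0 //.
  by rewrite size_polyN size_poly1 ltnS size_poly_gt0.
case/closed_rootP => x; rewrite rootE !hornerE subr_eq0 => /eqP qx1.
by exists x; apply: contra_eq_neq qx1 => ->; rewrite mul0r eq_sym oner_neq0.
Qed.

Definition ext_last n (v : 'I_n -> k) (x : k) (i : 'I_n.+1) : k :=
  if unlift ord_max i is Some j then v j else x.

Lemma meval_muni n (P : {mpoly k[n.+1]}) v x :
  P.@[ext_last v x] = (map_poly (meval v) (muni P)).[x].
Proof.
rewrite mevalE muniE raddf_sum horner_sum; apply: eq_bigr => m _.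
rewrite /= map_polyZ map_polyXn hornerZ hornerXn /= mevalZ mevalX -mulrA.
congr (_ * _); rewrite big_ord_recr /= /ext_last unlift_none; congr (_ * _).
by apply: eq_bigr => j _; rewrite mnmE -lift_ord_maxE liftK.
Qed.

Lemma mpoly_eq0_meval n (P : {mpoly k[n]}) : (forall v, P.@[v] = 0) -> P = 0.
Proof.
elim: n P => [|n IHn] P P0.
  by have := P0 (fun _ => 0); rewrite -[P]mpolyKC mevalC => ->.
have muniP0 : muni P = 0.
  apply/polyP => a; rewrite coef0; apply: IHn => v.
  have : map_poly (meval v) (muni P) = 0.
    apply/eqP/negPn/negP => /poly_exists_nonroot[x].
    by rewrite -meval_muni P0 eqxx.
  by move/polyP/(_ a); rewrite coef_map coef0.
by apply/mpolyP => m; rewrite -mcoeff_muni muniP0 coef0 !mcoeff0.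
Qed.

(* The t^(deg g) coefficient of restr_line b g is the top homogeneous
   component of g evaluated at b, so it cannot vanish for every b. *)
Lemma msize_le_restr_line n (g : {mpoly k[n]}) e :
  (forall b, size (restr_line b g) <= e)%N -> (msize g <= e)%N.
Proof.
move=> le_e; rewrite leqNgt; apply/negP => lt_e.
have g0 : g != 0 by apply: contraTneq lt_e => ->; rewrite msize0.
have top_deg : mdeg (mlead g) = (msize g).-1 by rewrite -mlead_deg.
have top0 : pihomog mdeg (msize g).-1 g = 0.
  apply: mpoly_eq0_meval => b; rewrite -coef_restr_line nth_default //.
  by rewrite (leq_trans (le_e b)) // -ltnS prednK ?(leq_ltn_trans _ lt_e).
have := mcoeff_pihomog g top_deg; rewrite top0 mcoeff0 => /esym/eqP.
by rewrite mleadc_eq0 (negbTE g0).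
Qed.

End Vanishing.

Section ExpLogCoordinates.
Variables (k : fieldType) (p N : nat).

Definition generic_upper : 'M[{mpoly k[N * N]}]_N := upper_mx (fun v => 'X_v).
Definition exp_coords := mx_coords (mx_exp p generic_upper).
Definition log_coords := mx_coords (mx_log generic_upper).

Lemma comp_generic_upper_log_coords :
  map_mx (comp_mpoly log_coords) generic_upper = mx_log generic_upper.
Proof.
apply/matrixP => i j; rewrite map_upper_mx !mxE /=; case: ifP => [_|lt_ij].
  by rewrite comp_mpolyXU -tnth_nth tnth_mktuple mxvecE.
rewrite (mx_series_strictly_upper _ _ (@upper_mx_strictly_upper _ _ _)) //.
by rewrite leqNgt lt_ij.
Qed.

Lemma pullback_upper_mx (b : 'I_(N * N) -> k) (f : {mpoly k[N * N]}) :
  pullback p (upper_mx b) f = restr_line b (f \mPo exp_coords).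
Proof.
rewrite /restr_line rmorph_comp_mpoly; apply: eq_mmap => [a|mm v _ _] /=.
  by rewrite mmapC.
case/mxvec_indexP: v => i j; rewrite tnth_mktuple /= !mxvecE.
set rho := mmap _ _.
have -> : rho (mx_exp p generic_upper i j) =
    map_mx rho (mx_exp p generic_upper) i j by rewrite mxE.
rewrite map_mx_series => [|a]; last first.
  by rewrite alg_mpolyC /rho /= mmapC alg_polyC.
rewrite -/(mx_exp p _) -mx_exp_expB; congr (mx_exp p _ i j).
apply/matrixP => i' j'; rewrite !mxE; case: ifP => _; rewrite /rho /=.
  by rewrite mmapX mmap1U mulrC.
by rewrite mmap0 mulr0.
Qed.

Hypotheses (hp : p \in [pchar k]) (hNp : (N <= p)%N).

Lemma comp_exp_log_coords (f : {mpoly k[N * N]}) :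
  in_kUN f -> (f \mPo exp_coords) \mPo log_coords = f.
Proof.
move=> f_kUN; rewrite rmorph_comp_mpoly -[RHS]comp_mpoly_id.
apply: eq_mmap => [a|mm v mm_f mm_v]; first exact: comp_mpolyC.
case/existsP: (f_kUN mm v mm_f mm_v) => i /existsP[j /andP[lt_ij /eqP ->]].
rewrite !tnth_mktuple /= mxvecE.
have -> : mx_exp p generic_upper i j \mPo log_coords =
    map_mx (comp_mpoly log_coords) (mx_exp p generic_upper) i j by rewrite mxE.
rewrite map_mx_series; last first.
  by move=> a; rewrite alg_mpolyC /= comp_mpolyC.
rewrite -/(mx_exp p _) comp_generic_upper_log_coords mx_exp_log //; last first.
  exact/strictly_upper_nilpotent/upper_mx_strictly_upper.
by rewrite !mxE lt_ij -val_eqE (ltn_eqF lt_ij) add0r.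
Qed.

End ExpLogCoordinates.

Section DegreeBounds.
Variable k : fieldType.

Lemma msizeM_leS (n : nat) (f g : {mpoly k[n]}) a b :
  (msize f <= a.+1)%N -> (msize g <= b.+1)%N -> (msize (f * g) <= (a + b).+1)%N.
Proof.
have [->|f0] := eqVneq f 0; first by rewrite mul0r msize0.
have [->|g0] := eqVneq g 0; first by rewrite mulr0 msize0.
move=> le_f le_g; rewrite msizeM // -subn1 leq_subLR.
by rewrite (leq_trans (leq_add le_f le_g)) // addnS addSn add1n.
Qed.

Lemma msize_prod_expr_le n m (q : 'I_n -> {mpoly k[m]}) (a : 'I_n -> nat) K :
  (forall i, msize (q i) <= K.+1)%N ->
  (msize (\prod_i q i ^+ a i) <= ((\sum_i a i) * K).+1)%N.
Proof.
move=> le_q; elim/big_rec2: _ => [|i s r _ le_r]; first by rewrite msize1.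
rewrite mulnDl; apply: msizeM_leS le_r.
elim: (a i) => [|t le_qt]; first by rewrite expr0 msize1.
by rewrite exprS mulSn; apply: msizeM_leS.
Qed.

Lemma msize_comp_mpoly_le n m (f : {mpoly k[n]}) (lq : n.-tuple {mpoly k[m]})
    D K :
  (forall i, msize (tnth lq i) <= K.+1)%N -> (msize f <= D.+1)%N ->
  (msize (f \mPo lq) <= (D * K).+1)%N.
Proof.
move=> le_lq le_f; rewrite comp_mpolyE (leq_trans (msize_sum _ _ _)) //.
apply/bigmax_leqP_seq => mm mm_f _.
rewrite (leq_trans (msizeZ_le _ _)) //.
rewrite (leq_trans (msize_prod_expr_le _ le_lq)) //.
rewrite ltnS leq_mul2r -mdegE -ltnS.
by rewrite (leq_trans (msize_mdeg_lt mm_f)) ?orbT.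
Qed.

Lemma msize_generic_upper_expr N t (i j : 'I_N) :
  (msize ((generic_upper k N ^+ t) i j) <= t.+1)%N.
Proof.
elim: t i j => [|t IHt] i j.
  by rewrite expr0 mxE; case: (i == j); rewrite ?msize1 ?msize0.
rewrite exprSr -mulmxE mxE (leq_trans (msize_sum _ _ _)) //.
apply/bigmax_leqP => l _; rewrite -addn1; apply: msizeM_leS => //.
by rewrite mxE; case: ifP; rewrite ?msize0 // msizeX mdeg1.
Qed.

Lemma msize_mx_coords_generic_series N c m v :
  (msize (tnth (mx_coords (mx_series c m (generic_upper k N))) v) <= m)%N.
Proof.
case/mxvec_indexP: v => i j; rewrite tnth_mktuple mxvecE summxE.
rewrite (leq_trans (msize_sum _ _ _)) //; apply/bigmax_leqP => t _.
rewrite mxE alg_mpolyC mul_mpolyC (leq_trans (msizeZ_le _ _)) //.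
exact: leq_trans (msize_generic_upper_expr _ _ _) (ltn_ord t).
Qed.

End DegreeBounds.

Lemma size_pullback_le (k : fieldType) p N (B : 'M[k]_N) f D :
  strictly_upper B -> (msize f <= D.+1)%N ->
  (size (pullback p B f) <= (D * p.-1).+1)%N.
Proof.
move=> B_upper f_size; rewrite -(upper_mx_coords B_upper) pullback_upper_mx.
apply: leq_trans (size_restr_line_le _ _) (msize_comp_mpoly_le _ f_size) => v.
exact: leq_trans (msize_mx_coords_generic_series _ _ _) (leqSpred _).
Qed.

Lemma msize_le_pullback (k : closedFieldType) p N (f : {mpoly k[N * N]}) e :
  p \in [pchar k] -> (N <= p)%N -> in_kUN f ->
  (forall B, strictly_upper B -> B ^+ p = 0 ->
     (size (pullback p B f) <= e)%N) ->
  (msize f <= (e.-1 * N.-1).+1)%N.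
Proof.
move=> hp hNp f_kUN f_deg; rewrite -(comp_exp_log_coords hp hNp f_kUN).
apply: msize_comp_mpoly_le => [v|].
  exact: leq_trans (msize_mx_coords_generic_series _ _ _) (leqSpred _).
apply: leq_trans (leqSpred _); apply: msize_le_restr_line => b.
rewrite -pullback_upper_mx; apply: f_deg; first exact: upper_mx_strictly_upper.
rewrite -(subnK hNp) exprD strictly_upper_nilpotent ?mulr0 //.
exact: upper_mx_strictly_upper.
Qed.

Unset Implicit Arguments.

Theorem proposition3p8 (k : closedFieldType) (p N e d : nat)
  (hp : p \in [pchar k]) (hNp : (N <= p)%N) (hed : (e * (N - 1) < d)%N) :
  (forall f : {mpoly k[N * N]},
     in_Udeg p (e%:Z - 1) f -> (msize f <= d)%N) /\
  (forall f : {mpoly k[N * N]},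
     in_kUN f -> (msize f <= d)%N ->
     in_Udeg p ((p%:Z - 1) * (d%:Z - 1)) f).
Proof.
have p_gt0 : (0 < p)%N := prime_gt0 (pcharf_prime hp).
have d_gt0 : (0 < d)%N := leq_ltn_trans (leq0n _) hed.
split=> [f [f_kUN f_deg] | f f_kUN f_size].
  apply: leq_trans (msize_le_pullback (e := e) hp hNp f_kUN _) _.
    by move=> B B_upper /(f_deg B B_upper); rewrite lerD2r lez_nat.
  by rewrite (leq_ltn_trans _ hed) // subn1 leq_mul2r leq_pred orbT.
split=> // B B_upper _; rewrite -(predn_int p_gt0) -(predn_int d_gt0).
rewrite -PoszM lerBlDr -PoszD lez_nat.
by rewrite addn1 mulnC size_pullback_le // prednK.
Qed.
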